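(* Let $k\ge 3$ and $r\ge 2$ be integers, let $H$ be a selfish $k$-graph with at least one edge, and let $G=G_H$ be a $(k-1)$-graph obtained from $H$ by removing, from each edge of $H$, one vertex of degree one. Then \[ R(H;r)\le R(G;r)+r\,(|E(H)|-1)+1 . \]
   Context: A $k$-graph is a $k$-uniform hypergraph. An edge of a hypergraph is called selfish if it contains a vertex of degree one (a vertex belonging to no other edge); a hypergraph is selfish if every edge is selfish. For a selfish $k$-graph $H$, $G_H$ denotes the $(k-1)$-graph obtained by deleting one degree-one vertex from each edge of $H$ (deleted vertices are removed from the vertex set), so $|E(G_H)|=|E(H)|$. For a $j$-graph $F$ and integer $r\ge2$, $R(F;r)$ is the minimum $n$ such that every $r$-coloring of the edges of the complete $j$-graph $K_n^{(j)}$ contains a monochromatic copy of $F$. *)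

From mathcomp Require Import all_boot.
Set Implicit Arguments. Unset Strict Implicit. Unset Printing Implicit Defensive.

(* A hypergraph is given by a finite vertex set A : {set V} and an edge set
   E : {set {set V}} (each edge a subset of A). *)
Definition uniform (V : finType) (j : nat) (E : {set {set V}}) : Prop :=
  forall e, e \in E -> #|e| = j.

Definition deg (V : finType) (E : {set {set V}}) (v : V) : nat :=
  #|[set e in E | v \in e]|.

Definition selfish (V : finType) (E : {set {set V}}) : Prop :=
  forall e, e \in E -> exists2 v, v \in e & deg E v = 1.

(* An r-colouring of the edges of K_n^(j) is given by a map from subsets of
   'I_n to colours 'I_r (only its values on j-subsets matter). *)
Definition mono_copy (n r : nat) (c : {set 'I_n} -> 'I_r)
    (V : finType) (A : {set V}) (E : {set {set V}}) : Prop :=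
  exists f : V -> 'I_n, {in A &, injective f} /\
    exists i : 'I_r, forall e, e \in E -> c (f @: e) = i.

Definition arrows (n r : nat) (V : finType) (A : {set V}) (E : {set {set V}})
  : Prop := forall c : {set 'I_n} -> 'I_r, mono_copy c A E.

Definition ramsey_number (r : nat) (V : finType) (A : {set V})
    (E : {set {set V}}) (N : nat) : Prop :=
  arrows N r A E /\ forall m, m < N -> ~ arrows m r A E.

From mathcomp Require Import all_boot.

Set Implicit Arguments. Unset Strict Implicit. Unset Printing Implicit Defensive.

(* Put [p := r (|E| - 1) + 1] fresh apex vertices to the right of [n]
   vertices arrowing [G_H].  Colour a set [S] of left vertices by a colour
   [i] such that at least [|E|] apexes [y] give [S + y] colour [i]
   (pigeonhole).  A monochromatic copy of [G_H] for this colouring leaves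
   every edge [e] of [G_H] at least [|E|] apexes of the common colour, so the
   edges can be given pairwise distinct apexes greedily; sending each
   deleted vertex to the apex of its (unique) edge embeds [H]
   monochromatically. *)

Lemma pigeonhole_fibre (T : finType) (r m : nat) (c : T -> 'I_r) :
  r * (m - 1) < #|T| -> exists i, m <= #|[set x | c x == i]|.
Proof.
move=> rm_lt_T; apply/existsP; apply: contraLR rm_lt_T.
rewrite negb_exists -leqNgt => /forallP small_fibres.
have -> : #|T| = \sum_(i < r) #|[set x | c x == i]|.
  rewrite -sum1_card (partition_big c xpredT) //=.
  by apply: eq_bigr => i _; rewrite sum1dep_card.
rewrite -[r in r * _]card_ord -sum_nat_const; apply: leq_sum => i _.
by have := small_fibres i; rewrite -ltnNge; case: m {small_fibres} => // m; rewrite subn1.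
Qed.

Lemma distinct_representatives (T : finType) (U : eqType) (t0 : T)
    (F : U -> {set T}) (l : seq U) :
  uniq l -> (forall u, u \in l -> size l <= #|F u|) ->
  exists g : U -> T, (forall u, u \in l -> g u \in F u) /\ {in l &, injective g}.
Proof.
elim: l => [|u l IHl] /=; first by exists (fun=> t0).
case/andP=> u_notin_l l_uniq large.
have [g [gF g_inj]] : exists g : U -> T,
    (forall v, v \in l -> g v \in F v) /\ {in l &, injective g}.
  apply: IHl => // v vl; apply: ltnW; apply: large; exact: mem_behead.
have [t tFu t_fresh] : exists2 t, t \in F u & t \notin map g l.
  apply/subsetPn; apply: contraTN (large u (mem_head _ _)) => Fu_sub.
  rewrite -ltnNge ltnS (leq_trans (subset_leq_card Fu_sub)) //.
  by rewrite -(size_map g) card_size.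
exists (fun v => if v == u then t else g v); split.
  by move=> v; rewrite inE; case: eqP => [-> //|_ /= vl]; apply: gF.
move=> x y; rewrite !inE.
case: (eqVneq x u) => [->|xu]; case: (eqVneq y u) => [->|yu] //= xl yl.
- by move=> t_eq; rewrite t_eq map_f in t_fresh.
- by move=> t_eq; rewrite -t_eq map_f in t_fresh.
- exact: g_inj.
Qed.

Lemma deg1_edge_uniq (V : finType) (E : {set {set V}}) v e e' :
  deg E v = 1 -> e \in E -> e' \in E -> v \in e -> v \in e' -> e = e'.
Proof.
move=> /eqP/cards1P [e0 star_v] eE e'E ve ve'.
have : e \in [set e in E | v \in e] by rewrite inE eE ve.
have : e' \in [set e in E | v \in e] by rewrite inE e'E ve'.
by rewrite star_v !inE => /eqP -> /eqP ->.
Qed.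

Section SelfishExtension.

Variables (V : finType) (E : {set {set V}}) (s : {set V} -> V).
Hypothesis sE : forall e, e \in E -> s e \in e /\ deg E (s e) = 1.
Variables (n p : nat) (f : V -> 'I_n) (g : {set V} -> 'I_p).

Definition selfish_extension (v : V) : 'I_(n + p) :=
  if [pick e in E | s e == v] is Some e then rshift n (g e)
  else lshift p (f v).

Lemma selfish_extension_sel e :
  e \in E -> selfish_extension (s e) = rshift n (g e).
Proof.
move=> eE; rewrite /selfish_extension; case: pickP => [e' /andP[e'E /eqP se]|].
  have [se_e deg_se] := sE eE; have [se'_e' _] := sE e'E.
  by rewrite se in se'_e'; rewrite (deg1_edge_uniq deg_se eE e'E se_e se'_e').
by move/(_ e); rewrite eE eqxx.
Qed.

Lemma selfish_extension_other e v :
  e \in E -> v \in e -> v != s e -> selfish_extension v = lshift p (f v).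
Proof.
move=> eE ve; rewrite /selfish_extension; case: pickP => [e' /andP[e'E /eqP se]|//].
have [se'_e' deg_se'] := sE e'E; rewrite se in se'_e' deg_se'.
by rewrite (deg1_edge_uniq deg_se' eE e'E ve se'_e') -se eqxx.
Qed.

Lemma selfish_extension_imset e : e \in E ->
  selfish_extension @: e = lshift p @: (f @: (e :\ s e)) :|: [set rshift n (g e)].
Proof.
move=> eE; have [se_e _] := sE eE.
rewrite -{1}(setD1K se_e) imsetU1 selfish_extension_sel // setUC -imset_comp.
congr (_ :|: _); apply: eq_in_imset => v; rewrite in_setD1 => /andP[v_s ve].
exact: selfish_extension_other eE ve v_s.
Qed.

Lemma selfish_extension_inj :
  {in ~: (s @: E) &, injective f} -> {in E &, injective g} ->
  injective selfish_extension.
Proof.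
move=> f_inj g_inj v w; rewrite /selfish_extension.
case: pickP => [e /andP[eE /eqP <-]|v_kept];
  case: pickP => [e' /andP[e'E /eqP <-]|w_kept].
- by move/rshift_inj/g_inj => -> //.
- by move/eqP; rewrite eq_rlshift.
- by move/eqP; rewrite eq_lrshift.
- have kept x : (forall e, (e \in E) && (s e == x) = false) -> x \in ~: (s @: E).
    move=> x_kept; rewrite inE; apply/imsetP => -[e eE x_se].
    by have := x_kept e; rewrite eE x_se eqxx.
  by move/lshift_inj/f_inj; apply; apply: kept.
Qed.

End SelfishExtension.

Section ApexColouring.

Variables (n p r : nat) (c : {set 'I_(n + p)} -> 'I_r).

Definition apexes (S : {set 'I_n}) (i : 'I_r) : {set 'I_p} :=
  [set y | c (lshift p @: S :|: [set rshift n y]) == i].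

Lemma exists_popular_colouring m : r * (m - 1) < p ->
  exists cG : {set 'I_n} -> 'I_r, forall S, m <= #|apexes S (cG S)|.
Proof.
move=> rm_lt_p; exists (fun S => odflt (c set0) [pick i | m <= #|apexes S i|]).
move=> S; case: pickP => [i //|no_popular].
have [|i popular] :=
  @pigeonhole_fibre _ r m (fun y => c (lshift p @: S :|: [set rshift n y])).
  by rewrite card_ord.
by have := no_popular i; rewrite /= /apexes popular.
Qed.

End ApexColouring.

Lemma arrows_selfish_extension (V : finType) (E : {set {set V}})
    (s : {set V} -> V) (n r : nat) :
  (forall e, e \in E -> s e \in e /\ deg E (s e) = 1) ->
  arrows n r (~: (s @: E)) [set e :\ s e | e in E] ->
  arrows (n + (r * (#|E| - 1)).+1) r [set: V] E.
Proof.
move=> sE G_arrows c.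
have [cG popular] := @exists_popular_colouring _ _ _ c #|E| (ltnSn _).
have [f [f_inj [i f_mono]]] := G_arrows cG.
have f_mono_edge e : e \in E -> cG (f @: (e :\ s e)) = i.
  by move=> eE; apply: f_mono; apply/imsetP; exists e.
pose F e := apexes c (f @: (e :\ s e)) i.
have F_large e : e \in enum E -> size (enum E) <= #|F e|.
  by rewrite mem_enum -cardE => eE; rewrite /F -(f_mono_edge e eE).
have [g [gF g_inj]] := distinct_representatives ord0 (enum_uniq _) F_large.
exists (selfish_extension E s f g); split.
  move=> v w _ _; apply: selfish_extension_inj => // e e' eE e'E.
  by apply: g_inj; rewrite mem_enum.
exists i => e eE; rewrite selfish_extension_imset //.
by have := gF e; rewrite mem_enum inE => /(_ eE)/eqP.
Qed.

Theorem lemma5 (k r : nat) (V : finType) (E : {set {set V}})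
    (s : {set V} -> V) (NH NG : nat) :
  3 <= k -> 2 <= r ->
  uniform k E -> selfish E -> E != set0 ->
  (forall e, e \in E -> s e \in e /\ deg E (s e) = 1) ->
  ramsey_number r [set: V] E NH ->
  ramsey_number r (~: (s @: E)) [set e :\ s e | e in E] NG ->
  NH <= NG + r * (#|E| - 1) + 1.
Proof.
move=> _ _ _ _ _ sE [_ NH_min] [G_arrows _].
have H_arrows := arrows_selfish_extension sE G_arrows.
rewrite -addnA addn1 leqNgt; apply/negP => lt_NH.
exact: NH_min _ lt_NH H_arrows.
Qed.
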